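(* Let $G = NH$ be a finite Frobenius group with Frobenius kernel $N$ and Frobenius complement $H$. Then $\eta(G) = \eta^*(N) + \eta(H)$, where $\eta^*(N)$ is the number of $H$-orbits on the set of $N$-conjugacy classes of maximal cyclic subgroups of $N$.
   Context: A cyclic subgroup $C$ of a finite group $G$ is maximal cyclic if there is no cyclic subgroup $D$ of $G$ with $C < D$. $\eta(G)$ denotes the number of conjugacy classes of maximal cyclic subgroups of $G$. *)

From mathcomp Require Import all_boot fingroup morphism cyclic frobenius.
Set Implicit Arguments. Unset Strict Implicit. Unset Printing Implicit Defensive.
Local Open Scope group_scope.

Definition maxcyclic (gT : finGroupType) (G : {set gT}) : {set {set gT}} :=
  [set C : {set gT} | [max C of D | (D \subset G) && cyclic D]].

Definition eta (gT : finGroupType) (G : {set gT}) : nat :=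
  #|[set C :^: G | C in maxcyclic G]|.

Definition Nclasses_maxcyclic (gT : finGroupType) (N : {set gT})
  : {set {set {set gT}}} :=
  [set C :^: N | C in maxcyclic N].

Definition conj_family (gT : finGroupType) (X : {set {set gT}}) (h : gT)
  : {set {set gT}} := [set Y :^ h | Y in X].

Definition eta_star (gT : finGroupType) (N H : {set gT}) : nat :=
  #|[set [set conj_family X h | h in H] | X in Nclasses_maxcyclic N]|.

From mathcomp Require Import all_boot fingroup morphism action gproduct cyclic frobenius.
Set Implicit Arguments. Unset Strict Implicit. Unset Printing Implicit Defensive.
Local Open Scope group_scope.

(* Every element of a Frobenius group G = N ><| H lies in N or in a conjugate
   of H, and N meets every conjugate of H trivially.  So a maximal cyclic
   subgroup of G is G-conjugate to a maximal cyclic subgroup of N or of H (and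
   not both), and conversely those are maximal cyclic in G.  As G = N H, two
   subgroups of N are G-conjugate iff their N-classes lie in one H-orbit; as H
   is a TI-subgroup with N_G(H) = H, two nontrivial subgroups of H that are
   G-conjugate are already H-conjugate. *)

Lemma card_imset_eqrel (aT T1 T2 : finType) (A : {set aT}) (f : aT -> T1) (g : aT -> T2) :
  {in A &, forall x y, (f x == f y) = (g x == g y)} -> #|f @: A| = #|g @: A|.
Proof.
move=> fg; pose fg_pair x := (f x, g x).
have -> : f @: A = fst @: (fg_pair @: A) by rewrite -imset_comp.
have -> : g @: A = snd @: (fg_pair @: A) by rewrite -imset_comp.
have inj_fst : {in fg_pair @: A &, injective fst}.
  move=> _ _ /imsetP[x Ax ->] /imsetP[y Ay ->] /= fxy.
  by congr pair => //; apply/eqP; rewrite -fg ?fxy.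
have inj_snd : {in fg_pair @: A &, injective snd}.
  move=> _ _ /imsetP[x Ax ->] /imsetP[y Ay ->] /= gxy.
  by congr pair => //; apply/eqP; rewrite fg ?gxy.
by rewrite (card_in_imset inj_fst) (card_in_imset inj_snd).
Qed.

Section MaxCyclic.
Variable gT : finGroupType.
Implicit Types (X Y C D : {group gT}) (g : gT).

Lemma maxcyclic_group (A C : {set gT}) :
  C \in maxcyclic A -> exists C' : {group gT}, C = C'.
Proof. by rewrite inE => /maxsetp/andP[gC _]; exists (Group gC). Qed.

Lemma maxcyclicP X C :
  reflect [/\ C \subset X, cyclic C & forall D, D \subset X -> cyclic D ->
            C \subset D -> D :=: C]
          (gval C \in maxcyclic X).
Proof.
rewrite inE; apply: (iffP maxgroupP) => [[/andP[sCX cC] maxC]|[sCX cC maxC]].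
  by split=> // D sDX cD; apply: maxC; rewrite sDX.
by split=> [|D /andP[]]; [rewrite sCX | apply: maxC].
Qed.

Lemma maxcyclic_neq1 X C : X :!=: 1 -> gval C \in maxcyclic X -> C :!=: 1.
Proof.
move=> ntX /maxcyclicP[_ _ maxC]; apply: contraNneq ntX => C1.
apply/eqP/trivgP/subsetP=> x Xx; rewrite -cycle_subG.
by rewrite (maxC <[x]>%G) ?cycle_subG ?cycle_cyclic ?C1 ?sub1G.
Qed.

Lemma maxcyclicS X Y C :
  X \subset Y -> C \subset X -> gval C \in maxcyclic Y -> gval C \in maxcyclic X.
Proof.
move=> sXY sCX /maxcyclicP[_ cC maxC]; apply/maxcyclicP.
by split=> // D sDX; apply: maxC; apply: subset_trans sXY.
Qed.

Lemma maxcyclic_sup X Y C :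
  X \subset Y -> gval C \in maxcyclic X ->
  (forall D, D \subset Y -> cyclic D -> C \subset D -> D \subset X) ->
  gval C \in maxcyclic Y.
Proof.
move=> sXY /maxcyclicP[sCX cC maxC] supC; apply/maxcyclicP.
split=> [|//|D sDY cD sCD]; first exact: subset_trans sXY.
by apply: maxC; rewrite ?supC.
Qed.

Lemma maxcyclicJ X C g : g \in X -> gval C \in maxcyclic X -> C :^ g \in maxcyclic X.
Proof.
move=> Xg /maxcyclicP[sCX cC maxC]; apply/(maxcyclicP X (C :^ g)%G).
split=> [||D sDX cD sCD] /=; first by rewrite -(conjGid Xg) conjSg.
  by rewrite cyclicJ.
have sDgX : D :^ g^-1 \subset X by rewrite sub_conjgV (conjGid Xg).
by rewrite -(maxC (D :^ g^-1)%G) ?conjsgKV ?cyclicJ -?sub_conjg.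
Qed.

End MaxCyclic.

Lemma sdprod_conjugates_orbit (gT : finGroupType) (G N H : {group gT}) (C D : {set gT}) :
  N ><| H = G -> (C \in D :^: G) = (C :^: N \in orbit 'Js^* H (D :^: N)).
Proof.
case/sdprodP=> _ defG nNH _.
have JsN A h : h \in H -> 'Js^*%act (A :^: N) h = (A :^ h) :^: N.
  by move=> Hh; rewrite -orbitJs /= setact_orbit (normsP nNH h Hh).
apply/idP/idP=> [|/imsetP[h Hh]].
  rewrite -defG => /imsetP[_ /mulsgP[n h Nn Hh ->] ->].
  by rewrite conjsgM -JsN // -orbitJs orbit_act // mem_orbit.
rewrite JsN // => eqC; have: C \in C :^: N by exact: orbit_refl.
rewrite eqC => /imsetP[n Nn ->]; rewrite -conjsgM mem_orbit //.
by rewrite -defG -(normC nNH) mem_mulg.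
Qed.

Lemma card_sdprod_classes_maxcyclic_ker (gT : finGroupType) (G N H : {group gT}) :
  N ><| H = G -> #|[set C :^: G | C in maxcyclic N]| = eta_star N H.
Proof.
move=> defG; rewrite /eta_star /Nclasses_maxcyclic -imset_comp.
apply: card_imset_eqrel => C D _ _ /=.
have orbitE X : [set conj_family X h | h in H] = orbit 'Js^* H X by [].
by rewrite -!orbitJs !orbitE !orbit_eq_mem (sdprod_conjugates_orbit _ _ defG).
Qed.

Section FrobeniusMaxCyclic.
Variables (gT : finGroupType) (G N H : {group gT}).
Hypothesis frobG : [Frobenius G = N ><| H].
Implicit Types (C D : {group gT}) (g : gT).

Let defG : N ><| H = G. Proof. by case/Frobenius_context: frobG. Qed.
Let ntN : N :!=: 1. Proof. by case/Frobenius_context: frobG. Qed.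
Let ntH : H :!=: 1. Proof. by case/Frobenius_context: frobG. Qed.
Let sNG : N \subset G. Proof. by case/sdprod_context: defG => /andP[]. Qed.
Let sHG : H \subset G. Proof. by case/sdprod_context: defG. Qed.
Let tiNH : N :&: H = 1. Proof. by case/sdprod_context: defG. Qed.
Let nNG : G \subset 'N(N). Proof. by case/sdprod_context: defG => /normal_norm. Qed.

Lemma Frobenius_cyclic_sub D :
  D \subset G -> cyclic D -> D \subset N \/ exists2 g, g \in G & D \subset H :^ g.
Proof.
move=> sDG /cyclicP[x defD]; move: sDG; rewrite defD !cycle_subG => Gx.
have /bigcupP[B] : x \in cover (gval N |: H^# :^: N).
  by rewrite (cover_partition (Frobenius_partition frobG)).
case/setU1P=> [-> | /imsetP[n Nn ->]] xB; first by left.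
right; exists n; first exact: (subsetP sNG).
by rewrite cycle_subG; move: xB; apply/subsetP; rewrite conjSg subsetDl.
Qed.

Lemma Frobenius_kerI_complJ g : g \in G -> N :&: H :^ g = 1.
Proof.
by move=> Gg; rewrite -{1}(normsP nNG g Gg) -conjIg tiNH conjs1g.
Qed.

Lemma Frobenius_complJ_mem D g :
  D \subset H -> D :!=: 1 -> g \in G -> D :^ g \subset H -> g \in H.
Proof.
move=> sDH ntD Gg sDgH; have [x Dx ntx] := trivgPn _ ntD.
have /andP[_ /normedTI_memJ_P[_ _ tiH]] := FrobeniusWcompl frobG.
have Hx : x \in H^# by rewrite !inE ntx (subsetP sDH).
by rewrite -(tiH x g Hx Gg) !inE conjg_eq1 ntx (subsetP sDgH) ?memJ_conjg.
Qed.

Lemma maxcyclic_Frobenius_ker C : gval C \in maxcyclic N -> gval C \in maxcyclic G.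
Proof.
move=> maxC; have ntC := maxcyclic_neq1 ntN maxC; have /maxcyclicP[sCN _ _] := maxC.
apply: (maxcyclic_sup _ maxC) => // D sDG cD sCD.
have [//|[g Gg sDHg]] := Frobenius_cyclic_sub sDG cD.
case/eqP: ntC; apply/trivgP; rewrite -(Frobenius_kerI_complJ Gg) subsetI sCN.
exact: subset_trans sDHg.
Qed.

Lemma maxcyclic_Frobenius_compl C : gval C \in maxcyclic H -> gval C \in maxcyclic G.
Proof.
move=> maxC; have ntC := maxcyclic_neq1 ntH maxC; have /maxcyclicP[sCH _ _] := maxC.
apply: (maxcyclic_sup _ maxC) => // D sDG cD sCD.
have [sDN|[g Gg sDHg]] := Frobenius_cyclic_sub sDG cD.
  case/eqP: ntC; apply/trivgP; rewrite -tiNH subsetI sCH andbT.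
  exact: subset_trans sDN.
have Hg : g^-1 \in H.
  apply: (Frobenius_complJ_mem sCH ntC); rewrite ?groupV //.
  by rewrite sub_conjgV (subset_trans sCD).
by rewrite -(conjGid (groupVr Hg)) invgK.
Qed.

Lemma maxcyclic_Frobenius C :
  gval C \in maxcyclic G ->
  gval C \in maxcyclic N \/ exists2 g, g \in G & C :^ g \in maxcyclic H.
Proof.
move=> maxC; have /maxcyclicP[sCG cC _] := maxC.
have [sCN|[g Gg sCHg]] := Frobenius_cyclic_sub sCG cC.
  by left; apply: maxcyclicS maxC.
right; exists g^-1; rewrite ?groupV //.
by apply: (maxcyclicS (C := (C :^ g^-1)%G) sHG); rewrite ?sub_conjgV ?maxcyclicJ ?groupV.
Qed.

Lemma Frobenius_classes_maxcyclicU :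
  [set C :^: G | C in maxcyclic G] =
  [set C :^: G | C in maxcyclic N] :|: [set C :^: G | C in maxcyclic H].
Proof.
apply/eqP; rewrite eqEsubset subUset; apply/and3P; split;
  apply/subsetP=> _ /imsetP[C maxC ->]; have [C' eC] := maxcyclic_group maxC; subst C.
- have [maxCN | [g Gg maxCgH]] := maxcyclic_Frobenius maxC.
    by apply/setUP; left; apply: imset_f.
  apply/setUP; right; apply/imsetP; exists (C' :^ g) => //.
  by rewrite conjugates_conj lcoset_id.
- by apply: imset_f; apply: maxcyclic_Frobenius_ker.
by apply: imset_f; apply: maxcyclic_Frobenius_compl.
Qed.

Lemma Frobenius_classes_maxcyclicI :
  [set C :^: G | C in maxcyclic N] :&: [set C :^: G | C in maxcyclic H] = set0.
Proof.
apply/setP=> Z; rewrite !inE; apply/andP=> -[/imsetP[C maxC ->] /imsetP[D maxD]].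
have [C' eC] := maxcyclic_group maxC; have [D' eD] := maxcyclic_group maxD; subst C D.
move/eqP; rewrite -!orbitJs eq_sym orbit_eq_mem => /imsetP[g Gg eDC].
have /maxcyclicP[sCN _ _] := maxC; have /maxcyclicP[sDH _ _] := maxD.
case/eqP: (maxcyclic_neq1 ntH maxD); apply/trivgP.
by rewrite -tiNH subsetI sDH andbT eDC -(normsP nNG g Gg) conjSg.
Qed.

Lemma card_Frobenius_classes_maxcyclic_compl :
  #|[set C :^: G | C in maxcyclic H]| = eta H.
Proof.
apply: card_imset_eqrel => C D maxC maxD.
have [C' eC] := maxcyclic_group maxC; have [D' eD] := maxcyclic_group maxD; subst C D.
have /maxcyclicP[sCH _ _] := maxC; have /maxcyclicP[sDH _ _] := maxD.
rewrite -!orbitJs !orbit_eq_mem; apply/idP/idP=> [/imsetP[g Gg eCD] | ]; last first.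
  by apply/subsetP; rewrite conjugatesS.
apply/imsetP; exists g => //.
by apply: (Frobenius_complJ_mem sDH (maxcyclic_neq1 ntH maxD) Gg); rewrite -eCD.
Qed.

End FrobeniusMaxCyclic.

Theorem proposition2p2 (gT : finGroupType) (G N H : {group gT}) :
  [Frobenius G = N ><| H] -> eta G = (eta_star N H + eta H)%N.
Proof.
move=> frobG; have [defG _ _ _ _] := Frobenius_context frobG.
rewrite -(card_sdprod_classes_maxcyclic_ker defG).
rewrite -(card_Frobenius_classes_maxcyclic_compl frobG) /eta.
rewrite (Frobenius_classes_maxcyclicU frobG) -cardsUI.
by rewrite (Frobenius_classes_maxcyclicI frobG) cards0 addn0.
Qed.
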